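(* Let $n\ge1$ and let $G\subset GL(2n,\mathbb{R})$ be the subgroup of block matrices $E=\begin{pmatrix}S&O\\C&T\end{pmatrix}$ with $S,T\in GL(n,\mathbb{R})$, $C\in M(n,\mathbb{R})$, with the subspace topology. Let $X=G\times\mathbb{R}^n$ (product topology) with the quandle operation $(E_0,x_0)*(E_1,x_1)=(E_1E_0E_1^{-1},\ S_1x_0+(I-S_1)x_1)$, where $E_i=\begin{pmatrix}S_i&O\\C_i&T_i\end{pmatrix}$. Let $A=\mathbb{R}^n$ with $\eta_{(E_0,x_0),(E_1,x_1)}(a)=T_1a$ and $\tau_{(E_0,x_0),(E_1,x_1)}(a)=(I-T_1)a$. Then $(A,\eta,\tau)$ is a topological $X$-module and $H^2_{GC}(X,A)\neq0$; a nontrivial class is given by $\kappa_{(E_0,x_0),(E_1,x_1)}=C_1(x_0-x_1)$.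
   Context: For a topological quandle $X$, an $X$-module is a triple $(A,\eta,\tau)$ where $A$ is a topological abelian group, $\eta_{x,y}:A\to A$ ($x,y\in X$) are continuous group automorphisms and $\tau_{x,y}:A\to A$ continuous group endomorphisms with: $\eta_{x*y,z}\eta_{x,y}=\eta_{x*z,y*z}\eta_{x,z}$; $\eta_{x*y,z}\tau_{x,y}=\tau_{x*z,y*z}\eta_{y,z}$; $\tau_{x*y,z}=\eta_{x*z,y*z}\tau_{x,z}+\tau_{x*z,y*z}\tau_{y,z}$; $\tau_{x,x}+\eta_{x,x}=\mathrm{id}_A$. The second continuous generalized cohomology group is $H^2_{GC}(X,A)=Z^2/B^2$, where $Z^2$ is the group of continuous maps $\kappa:X\times X\to A$, $(x,y)\mapsto\kappa_{x,y}$, with $\kappa_{x,x}=0$ and $\eta_{x*y,z}\kappa_{x,y}+\kappa_{x*y,z}=\eta_{x*z,y*z}\kappa_{x,z}+\tau_{x*z,y*z}\kappa_{y,z}+\kappa_{x*z,y*z}$ for all $x,y,z$ (equivalently, $(x,a)*(y,b)=(x*y,\eta_{x,y}(a)+\tau_{x,y}(b)+\kappa_{x,y})$ is a quandle operation on $X\times A$), and $B^2$ consists of the maps $(x,y)\mapsto\eta_{x,y}(f(x))+\tau_{x,y}(f(y))-f(x*y)$ for continuous $f:X\to A$. *)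

From Stdlib Require Import Reals ClassicalEpsilon.
From mathcomp Require Import all_boot.

Local Open Scope R_scope.

Definition vec (n : nat) := 'I_n -> R.
Definition mat (m k : nat) := 'I_m -> 'I_k -> R.

Definition vzero {n} : vec n := fun _ => 0.
Definition vadd {n} (x y : vec n) : vec n := fun i => x i + y i.
Definition vsub {n} (x y : vec n) : vec n := fun i => x i - y i.

Definition mzero {m k} : mat m k := fun _ _ => 0.
Definition idm (n : nat) : mat n n := fun i j => if i == j then 1 else 0.
Definition msub {m k} (A B : mat m k) : mat m k := fun i j => A i j - B i j.
Definition mmul {m k p} (A : mat m k) (B : mat k p) : mat m p :=
  fun i j => \big[Rplus/0]_(l < k) (A i l * B l j).
Definition mvmul {m k} (A : mat m k) (x : vec k) : vec m :=
  fun i => \big[Rplus/0]_(l < k) (A i l * x l).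

Definition invertible {n} (A : mat n n) : Prop :=
  exists B : mat n n, mmul A B = idm n /\ mmul B A = idm n.
(* the inverse matrix (chosen; unique when A is invertible) *)
Definition minv {n} (A : mat n n) : mat n n :=
  epsilon (inhabits (idm n)) (fun B => mmul A B = idm n /\ mmul B A = idm n).

Definition blkS {n} (E : mat (n + n) (n + n)) : mat n n :=
  fun i j => E (lshift n i) (lshift n j).
Definition blkO {n} (E : mat (n + n) (n + n)) : mat n n :=
  fun i j => E (lshift n i) (rshift n j).
Definition blkC {n} (E : mat (n + n) (n + n)) : mat n n :=
  fun i j => E (rshift n i) (lshift n j).
Definition blkT {n} (E : mat (n + n) (n + n)) : mat n n :=
  fun i j => E (rshift n i) (rshift n j).

Definition inG {n} (E : mat (n + n) (n + n)) : Prop :=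
  blkO E = mzero /\ invertible (blkS E) /\ invertible (blkT E).

Definition pt (n : nat) := (mat (n + n) (n + n) * vec n)%type.
Definition inX {n} (p : pt n) : Prop := inG p.1.

Definition qop {n} (p q : pt n) : pt n :=
  (mmul (mmul q.1 p.1) (minv q.1),
   vadd (mvmul (blkS q.1) p.2) (mvmul (msub (idm n) (blkS q.1)) q.2)).

(* "close d a b": all coordinates differ by less than d (sup-metric balls,
   which generate the Euclidean topology on each finite-dimensional space). *)
Definition vclose {n} (d : R) (x y : vec n) : Prop :=
  forall i, Rabs (x i - y i) < d.
Definition mclose {m k} (d : R) (A B : mat m k) : Prop :=
  forall i j, Rabs (A i j - B i j) < d.
Definition pclose {n} (d : R) (p q : pt n) : Prop :=
  mclose d p.1 q.1 /\ vclose d p.2 q.2.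
Definition prclose {T U} (cT : R -> T -> T -> Prop) (cU : R -> U -> U -> Prop)
  (d : R) (a b : T * U) : Prop := cT d a.1 b.1 /\ cU d a.2 b.2.

Definition cont_on {T U} (cT : R -> T -> T -> Prop) (cU : R -> U -> U -> Prop)
  (P : T -> Prop) (f : T -> U) : Prop :=
  forall x, P x -> forall eps, 0 < eps -> exists del, 0 < del /\
    forall y, P y -> cT del x y -> cU eps (f x) (f y).

Definition PX2 {n} (a : pt n * pt n) : Prop := inX a.1 /\ inX a.2.

Definition is_top_quandle {n} (op : pt n -> pt n -> pt n) : Prop :=
  (forall x y, inX x -> inX y -> inX (op x y)) /\
  (forall x, inX x -> op x x = x) /\
  (forall y, inX y -> exists g : pt n -> pt n,
      (forall x, inX x -> inX (g x)) /\
      (forall x, inX x -> g (op x y) = x) /\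
      (forall x, inX x -> op (g x) y = x) /\
      cont_on pclose pclose inX g) /\
  (forall x y z, inX x -> inX y -> inX z ->
      op (op x y) z = op (op x z) (op y z)) /\
  cont_on (prclose pclose pclose) pclose PX2 (fun a => op a.1 a.2).

Definition additive {n} (f : vec n -> vec n) : Prop :=
  forall a b, f (vadd a b) = vadd (f a) (f b).
Definition bijective_map {n} (f : vec n -> vec n) : Prop :=
  exists g : vec n -> vec n, (forall a, g (f a) = a) /\ (forall a, f (g a) = a).
Definition vcont {n} (f : vec n -> vec n) : Prop :=
  cont_on vclose vclose (fun _ => True) f.

Definition is_top_module {n} (op : pt n -> pt n -> pt n)
  (eta tau : pt n -> pt n -> vec n -> vec n) : Prop :=
  (forall x y, inX x -> inX y ->
     additive (eta x y) /\ bijective_map (eta x y) /\ vcont (eta x y) /\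
     additive (tau x y) /\ vcont (tau x y)) /\
  (forall x y z, inX x -> inX y -> inX z ->
     (forall a, eta (op x y) z (eta x y a) = eta (op x z) (op y z) (eta x z a)) /\
     (forall a, eta (op x y) z (tau x y a) = tau (op x z) (op y z) (eta y z a)) /\
     (forall a, tau (op x y) z a =
                vadd (eta (op x z) (op y z) (tau x z a))
                     (tau (op x z) (op y z) (tau y z a)))) /\
  (forall x, inX x -> forall a, vadd (tau x x a) (eta x x a) = a).

Definition in_Z2 {n} (op : pt n -> pt n -> pt n)
  (eta tau : pt n -> pt n -> vec n -> vec n) (kappa : pt n -> pt n -> vec n) : Prop :=
  cont_on (prclose pclose pclose) vclose PX2 (fun a => kappa a.1 a.2) /\
  (forall x, inX x -> kappa x x = vzero) /\
  (forall x y z, inX x -> inX y -> inX z ->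
     vadd (eta (op x y) z (kappa x y)) (kappa (op x y) z) =
     vadd (vadd (eta (op x z) (op y z) (kappa x z))
                (tau (op x z) (op y z) (kappa y z)))
          (kappa (op x z) (op y z))).

Definition in_B2 {n} (op : pt n -> pt n -> pt n)
  (eta tau : pt n -> pt n -> vec n -> vec n) (kappa : pt n -> pt n -> vec n) : Prop :=
  exists f : pt n -> vec n, cont_on pclose vclose inX f /\
    forall x y, inX x -> inX y ->
      kappa x y = vsub (vadd (eta x y (f x)) (tau x y (f y))) (f (op x y)).

Definition eta7 {n} (p q : pt n) (a : vec n) : vec n := mvmul (blkT q.1) a.
Definition tau7 {n} (p q : pt n) (a : vec n) : vec n :=
  mvmul (msub (idm n) (blkT q.1)) a.
Definition kappa7 {n} (p q : pt n) : vec n := mvmul (blkC q.1) (vsub p.2 q.2).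

(* The group G is closed under conjugation: for E = E1 E0 E1^-1 the diagonal
   blocks are S1 S0 S1^-1 and T1 T0 T1^-1, and the lower-left block satisfies
   C S1 + T C1 = C1 S0 + T1 C0 (compare lower-left blocks in E E1 = E1 E0).
   The quandle and module axioms are identities between these blocks, and the
   cocycle identity for kappa is exactly the relation for C.  Everything is
   continuous because it is built from matrix entries by sums, products and
   Cramer's rule.  Finally, a coboundary vanishes at (p, q) whenever p * q = p
   and T_q = I, whereas p = (I, (1,...,1)) and q = ((I 0; I I), 0) satisfy
   both and kappa_{p,q} = (1,...,1). *)

From Pilot Require Import Defs.
From Stdlib Require Import Reals Lra FunctionalExtensionality ClassicalEpsilon.
From mathcomp Require Import all_boot all_algebra.
From mathcomp Require Import Rstruct.
Import GRing.Theory.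

Set Implicit Arguments.
Unset Strict Implicit.
Unset Printing Implicit Defensive.
Set Warnings "-notation-overridden,-ambiguous-paths".

Local Open Scope ring_scope.

Definition Mx {m k} (A : mat m k) : 'M[R]_(m, k) := \matrix_(i, j) A i j.
Definition Vx {m} (x : vec m) : 'cV[R]_m := \col_i x i.
Definition Fm {m k} (B : 'M[R]_(m, k)) : mat m k := fun i j => B i j.

Lemma MxK m k (B : 'M[R]_(m, k)) : Mx (Fm B) = B.
Proof. by apply/matrixP => i j; rewrite mxE. Qed.

Lemma Mx_inj m k : injective (@Mx m k).
Proof.
move=> A B /matrixP E; apply: functional_extensionality => i.
by apply: functional_extensionality => j; have := E i j; rewrite !mxE.
Qed.

Lemma Vx_inj m : injective (@Vx m).
Proof.
by move=> x y /matrixP E; apply: functional_extensionality => i; have := E i ord0; rewrite !mxE.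
Qed.

Lemma Mx_mmul m k p (A : mat m k) (B : mat k p) : Mx (mmul A B) = Mx A *m Mx B.
Proof. by apply/matrixP => i j; rewrite !mxE; apply: eq_bigr => l _; rewrite !mxE. Qed.

Lemma Vx_mvmul m k (A : mat m k) (x : vec k) : Vx (mvmul A x) = Mx A *m Vx x.
Proof. by apply/matrixP => i j; rewrite !mxE; apply: eq_bigr => l _; rewrite !mxE. Qed.

Lemma Mx_msub m k (A B : mat m k) : Mx (msub A B) = Mx A - Mx B.
Proof. by apply/matrixP => i j; rewrite !mxE. Qed.

Lemma Mx_idm m : Mx (idm m) = 1%:M.
Proof. by apply/matrixP => i j; rewrite !mxE /idm; case: (i == j). Qed.

Lemma Mx_mzero m k : Mx (@mzero m k) = 0.
Proof. by apply/matrixP => i j; rewrite !mxE. Qed.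

Lemma Vx_vadd m (x y : vec m) : Vx (vadd x y) = Vx x + Vx y.
Proof. by apply/matrixP => i j; rewrite !mxE. Qed.

Lemma Vx_vsub m (x y : vec m) : Vx (vsub x y) = Vx x - Vx y.
Proof. by apply/matrixP => i j; rewrite !mxE. Qed.

Lemma Vx_vzero m : Vx (@vzero m) = 0.
Proof. by apply/matrixP => i j; rewrite !mxE. Qed.

Section Blocks.
Variables (n : nat) (E : mat (n + n) (n + n)).
Lemma Mx_blkS : Mx (blkS E) = ulsubmx (Mx E). Proof. by apply/matrixP => i j; rewrite !mxE. Qed.
Lemma Mx_blkO : Mx (blkO E) = ursubmx (Mx E). Proof. by apply/matrixP => i j; rewrite !mxE. Qed.
Lemma Mx_blkC : Mx (blkC E) = dlsubmx (Mx E). Proof. by apply/matrixP => i j; rewrite !mxE. Qed.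
Lemma Mx_blkT : Mx (blkT E) = drsubmx (Mx E). Proof. by apply/matrixP => i j; rewrite !mxE. Qed.
End Blocks.

Lemma invertibleE m (A : mat m m) : invertible A <-> Mx A \in unitmx.
Proof.
split=> [[B [AB _]] | uA].
  by have := f_equal Mx AB; rewrite Mx_mmul Mx_idm => /mulmx1_unit [].
exists (Fm (invmx (Mx A))); split; apply: Mx_inj;
  by rewrite Mx_mmul Mx_idm MxK ?mulmxV ?mulVmx.
Qed.

Lemma Mx_minv m (A : mat m m) : invertible A -> Mx (minv A) = invmx (Mx A).
Proof.
move=> invA; have [AB _] := epsilon_spec (inhabits (idm m))
  (fun B => mmul A B = idm m /\ mmul B A = idm m) invA.
have uA : Mx A \in unitmx by apply/invertibleE.
have := f_equal Mx AB; rewrite Mx_mmul Mx_idm -/(minv A) => AB1.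
by rewrite -(mulKmx uA (Mx (minv A))) AB1 mulmx1.
Qed.

Definition monotone_close T (close : R -> T -> T -> Prop) :=
  forall d d' x y, Rle d d' -> close d x y -> close d' x y.

Section RealContinuity.
Local Open Scope R_scope.

Lemma exists_pos_forall_fin (I : finType) (Q : I -> R -> Prop) :
  (forall i d d', 0 < d' <= d -> Q i d -> Q i d') ->
  (forall i, exists d, 0 < d /\ Q i d) -> exists d, 0 < d /\ forall i, Q i d.
Proof.
move=> Q_mono Q_ex.
suff [d [d_gt0 Qd]] : exists d, 0 < d /\ forall i, i \in index_enum I -> Q i d.
  by exists d; split=> // i; apply: Qd; rewrite mem_index_enum.
elim: (index_enum I) => [|i s [d [d_gt0 Qd]]]; first by exists 1; split=> //; lra.
have [e [e_gt0 Qe]] := Q_ex i.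
have min_gt0 := Rmin_pos _ _ d_gt0 e_gt0.
exists (Rmin d e); split=> // j; rewrite inE => /orP [/eqP -> | js].
  by apply: Q_mono Qe; split; [|apply: Rmin_r].
by apply: Q_mono (Qd j js); split; [|apply: Rmin_l].
Qed.

Variables (T : Type) (close : R -> T -> T -> Prop) (P : T -> Prop).
Hypothesis close_mono : monotone_close close.

Definition rcont (f : T -> R) :=
  cont_on close (fun e a b => Rabs (a - b) < e) P f.

Lemma rcont_ext f g : (forall t, P t -> f t = g t) -> rcont g -> rcont f.
Proof.
move=> fg g_cont x Px eps eps_gt0; have [d [d_gt0 Hd]] := g_cont x Px eps eps_gt0.
by exists d; split=> // y Py xy; rewrite !fg //; apply: Hd.
Qed.

Lemma rcont_const c : rcont (fun _ => c).
Proof.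
by move=> x _ eps eps_gt0; exists 1; split=> [|y _ _]; rewrite ?Rminus_diag ?Rabs_R0; lra.
Qed.

Lemma rcont_proj (pi : T -> R) :
  (forall d x y, close d x y -> Rabs (pi x - pi y) < d) -> rcont pi.
Proof. by move=> pi_lip x _ eps eps_gt0; exists eps; split=> // y _; apply: pi_lip. Qed.

Lemma rcont_add f g : rcont f -> rcont g -> rcont (fun t => f t + g t).
Proof.
move=> f_cont g_cont x Px eps eps_gt0.
have [d1 [d1_gt0 H1]] := f_cont x Px (eps / 2) ltac:(lra).
have [d2 [d2_gt0 H2]] := g_cont x Px (eps / 2) ltac:(lra).
exists (Rmin d1 d2); split=> [|y Py xy]; first exact: Rmin_pos.
have := H1 y Py (close_mono (Rmin_l d1 d2) xy).
have := H2 y Py (close_mono (Rmin_r d1 d2) xy).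
have := Rabs_triang (f x - f y) (g x - g y).
by rewrite (_ : f x - f y + (g x - g y) = f x + g x - (f y + g y)); [lra | ring].
Qed.

Lemma rcont_opp f : rcont f -> rcont (fun t => - f t).
Proof.
move=> f_cont x Px eps eps_gt0; have [d [d_gt0 Hd]] := f_cont x Px eps eps_gt0.
exists d; split=> // y Py xy.
by rewrite (_ : - f x - - f y = - (f x - f y)) ?Rabs_Ropp; [apply: Hd | ring].
Qed.

Lemma rcont_mul f g : rcont f -> rcont g -> rcont (fun t => f t * g t).
Proof.
move=> f_cont g_cont x Px eps eps_gt0.
set a := Rabs (f x) + 1; set b := Rabs (g x) + 1.
have a_gt0 : 0 < a by have := Rabs_pos (f x); rewrite /a; lra.
have b_gt0 : 0 < b by have := Rabs_pos (g x); rewrite /b; lra.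
have [d1 [d1_gt0 H1]] := f_cont x Px (Rmin 1 (eps / (2 * b)))
  ltac:(apply: Rmin_pos; [lra | apply: Rdiv_lt_0_compat; lra]).
have [d2 [d2_gt0 H2]] := g_cont x Px (eps / (2 * a)) ltac:(apply: Rdiv_lt_0_compat; lra).
exists (Rmin d1 d2); split=> [|y Py xy]; first exact: Rmin_pos.
have /Rmin_Rgt [f_near1 f_near] := H1 y Py (close_mono (Rmin_l d1 d2) xy).
have g_near := H2 y Py (close_mono (Rmin_r d1 d2) xy).
have f_small : Rabs (f x - f y) * b < eps / 2.
  by apply: Rlt_le_trans (_ : eps / (2 * b) * b <= _); [nra | right; field; lra].
have g_small : Rabs (g x - g y) * a < eps / 2.
  by apply: Rlt_le_trans (_ : eps / (2 * a) * a <= _); [nra | right; field; lra].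
have fy_le : Rabs (f y) <= a.
  by have := Rabs_triang_inv (f y) (f x); rewrite Rabs_minus_sym /a; lra.
have := Rabs_triang (g x * (f x - f y)) (f y * (g x - g y)).
rewrite !Rabs_mult (_ : g x * (f x - f y) + f y * (g x - g y) = f x * g x - f y * g y);
  last by ring.
have := Rmult_le_compat_r _ _ _ (Rabs_pos (g x - g y)) fy_le.
have := Rabs_pos (f x - f y); rewrite /b in f_small; nra.
Qed.

Lemma rcont_inv f : (forall t, P t -> f t <> 0) -> rcont f -> rcont (fun t => / f t).
Proof.
move=> f_neq0 f_cont x Px eps eps_gt0.
set m := Rabs (f x); have m_gt0 : 0 < m by apply: Rabs_pos_lt; apply: f_neq0.
have em_gt0 : 0 < eps * m * m / 2 by have := Rmult_lt_0_compat _ _ eps_gt0 m_gt0; nra.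
have [d [d_gt0 Hd]] := f_cont x Px (Rmin (m / 2) (eps * m * m / 2))
  ltac:(apply: Rmin_pos; lra).
exists d; split=> // y Py xy; have /Rmin_Rgt [near_m near_eps] := Hd y Py xy.
have fy_ge : m / 2 <= Rabs (f y).
  by have := Rabs_triang_inv (f x) (f y); rewrite -/m; lra.
rewrite (_ : / f x - / f y = (f y - f x) / (f x * f y)); last by field; split; apply: f_neq0.
rewrite /Rdiv Rabs_mult Rabs_inv Rabs_mult -/m Rabs_minus_sym.
apply: (Rmult_lt_reg_r (m * Rabs (f y))); first nra.
rewrite Rmult_assoc Rinv_l ?Rmult_1_r; last nra.
have := Rmult_le_compat_l (eps * m) _ _ (Rlt_le _ _ (Rmult_lt_0_compat _ _ eps_gt0 m_gt0)) fy_ge.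
lra.
Qed.

Lemma rcont_big (I : Type) (op : R -> R -> R) (idx : R) (s : seq I) (pr : pred I)
    (F : I -> T -> R) :
  (forall f g, rcont f -> rcont g -> rcont (fun t => op (f t) (g t))) ->
  (forall i, rcont (F i)) -> rcont (fun t => \big[op/idx]_(i <- s | pr i) F i t).
Proof.
move=> op_cont F_cont; elim: s => [|i s IHs].
  by apply: rcont_ext (rcont_const idx) => t _; rewrite big_nil.
apply: (rcont_ext (g := fun t => if pr i then op (F i t) (\big[op/idx]_(j <- s | pr j) F j t)
                                 else \big[op/idx]_(j <- s | pr j) F j t)).
  by move=> t _; rewrite big_cons.
by case: (pr i) => //; apply: op_cont.
Qed.

Lemma rcont_det k (A : T -> 'M[R]_k) :
  (forall i j, rcont (fun t => A t i j)) -> rcont (fun t => \det (A t)).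
Proof.
move=> A_cont; apply: rcont_big => [f g|s]; first exact: rcont_add.
apply: rcont_mul; first exact: rcont_const.
by apply: rcont_big => [f g|i]; [apply: rcont_mul | apply: A_cont].
Qed.

Definition rcontM m k (A : T -> mat m k) := forall i j, rcont (fun t => A t i j).
Definition rcontV m (x : T -> vec m) := forall i, rcont (fun t => x t i).

Lemma cont_on_mat m k (A : T -> mat m k) : rcontM A -> cont_on close mclose P A.
Proof.
move=> A_cont x Px eps eps_gt0.
have [d [d_gt0 Hd]] := @exists_pos_forall_fin ('I_m * 'I_k)%type
  (fun ij d => forall y, P y -> close d x y -> Rabs (A x ij.1 ij.2 - A y ij.1 ij.2) < eps)
  (fun ij d d' d'_le Hd y Py xy => Hd y Py (close_mono (proj2 d'_le) xy))
  (fun ij => A_cont ij.1 ij.2 x Px eps eps_gt0).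
by exists d; split=> // y Py xy i j; apply: (Hd (i, j)).
Qed.

Lemma cont_on_vec m (x : T -> vec m) : rcontV x -> cont_on close vclose P x.
Proof.
move=> x_cont t Pt eps eps_gt0.
have [d [d_gt0 Hd]] := @exists_pos_forall_fin 'I_m
  (fun i d => forall y, P y -> close d t y -> Rabs (x t i - x y i) < eps)
  (fun i d d' d'_le Hd y Py ty => Hd y Py (close_mono (proj2 d'_le) ty))
  (fun i => x_cont i t Pt eps eps_gt0).
by exists d; split=> // y Py ty i; apply: Hd.
Qed.

Lemma cont_on_pt m (p : T -> pt m) :
  rcontM (fun t => (p t).1) -> rcontV (fun t => (p t).2) -> cont_on close pclose P p.
Proof.
move=> /cont_on_mat E_cont /cont_on_vec x_cont t Pt eps eps_gt0.
have [d1 [d1_gt0 H1]] := E_cont t Pt eps eps_gt0.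
have [d2 [d2_gt0 H2]] := x_cont t Pt eps eps_gt0.
exists (Rmin d1 d2); split=> [|y Py ty]; first exact: Rmin_pos.
by split; [apply: H1 (close_mono (Rmin_l _ _) ty) | apply: H2 (close_mono (Rmin_r _ _) ty)].
Qed.

Lemma rcontM_mmul m k l (A : T -> mat m k) (B : T -> mat k l) :
  rcontM A -> rcontM B -> rcontM (fun t => mmul (A t) (B t)).
Proof.
move=> A_cont B_cont i j; apply: rcont_big => [f g|r]; first exact: rcont_add.
exact: rcont_mul.
Qed.

Lemma rcontV_mvmul m k (A : T -> mat m k) (x : T -> vec k) :
  rcontM A -> rcontV x -> rcontV (fun t => mvmul (A t) (x t)).
Proof.
move=> A_cont x_cont i; apply: rcont_big => [f g|r]; first exact: rcont_add.
exact: rcont_mul.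
Qed.

Lemma rcontM_msub m k (A B : T -> mat m k) :
  rcontM A -> rcontM B -> rcontM (fun t => msub (A t) (B t)).
Proof. by move=> A_cont B_cont i j; apply: rcont_add; last apply: rcont_opp. Qed.

Lemma rcontV_vadd m (x y : T -> vec m) :
  rcontV x -> rcontV y -> rcontV (fun t => vadd (x t) (y t)).
Proof. by move=> x_cont y_cont i; apply: rcont_add. Qed.

Lemma rcontV_vsub m (x y : T -> vec m) :
  rcontV x -> rcontV y -> rcontV (fun t => vsub (x t) (y t)).
Proof. by move=> x_cont y_cont i; apply: rcont_add; last apply: rcont_opp. Qed.

(* Cramer's rule: the entries of the inverse are cofactors over the determinant. *)
Lemma rcontM_minv k (A : T -> mat k k) :
  (forall t, P t -> invertible (A t)) -> rcontM A -> rcontM (fun t => minv (A t)).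
Proof.
move=> A_inv A_cont i j.
have A_unit t : P t -> Mx (A t) \in unitmx by move/A_inv/invertibleE.
apply: (rcont_ext (g := fun t => (\det (Mx (A t)))^-1 * \adj (Mx (A t)) i j)).
  move=> t Pt; have := congr1 (fun M : 'M[R]_k => M i j) (Mx_minv (A_inv t Pt)).
  by rewrite /= mxE /invmx A_unit // mxE.
apply: rcont_mul.
  apply: rcont_inv; first by move=> t /A_unit; rewrite unitmxE unitfE => /eqP.
  by apply: rcont_det => a b; apply: rcont_ext (A_cont a b) => t _; rewrite mxE.
apply: (rcont_ext (g := fun t => (-1) ^+ (j + i) * \det (row' j (col' i (Mx (A t)))))).
  by move=> t _; rewrite mxE.
apply: rcont_mul; first exact: rcont_const.
by apply: rcont_det => a b; apply: rcont_ext (A_cont _ _) => t _; rewrite !mxE.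
Qed.

End RealContinuity.

Section BlockGroup.
Variable n : nat.
Implicit Types E : 'M[R]_(n + n).

Definition inGm E :=
  [/\ ursubmx E = 0, ulsubmx E \in unitmx & drsubmx E \in unitmx].

Lemma inGmE E : inGm E -> E = block_mx (ulsubmx E) 0 (dlsubmx E) (drsubmx E).
Proof. by case=> E0 _ _; rewrite -E0 submxK. Qed.

Lemma inGm_unit E : inGm E -> E \in unitmx.
Proof.
move=> GE; rewrite (inGmE GE); case: GE => _ uS uT.
by rewrite unitmxE det_lblock unitrM -!unitmxE uS uT.
Qed.

Lemma inGm_lblock (S C T : 'M[R]_n) :
  S \in unitmx -> T \in unitmx -> inGm (block_mx S 0 C T).
Proof. by move=> uS uT; split; rewrite ?block_mxKur ?block_mxKul ?block_mxKdr. Qed.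

Lemma inGm_conj_blocks E1 E0 : inGm E1 -> inGm E0 ->
  let E := E1 *m E0 *m invmx E1 in
  [/\ ursubmx E = 0,
      ulsubmx E = ulsubmx E1 *m ulsubmx E0 *m invmx (ulsubmx E1),
      drsubmx E = drsubmx E1 *m drsubmx E0 *m invmx (drsubmx E1)
    & dlsubmx E *m ulsubmx E1 + drsubmx E *m dlsubmx E1 =
      dlsubmx E1 *m ulsubmx E0 + drsubmx E1 *m dlsubmx E0].
Proof.
move=> GE1 GE0 E.
have EE1 : E *m E1 = E1 *m E0 by rewrite /E mulmxKV // inGm_unit.
rewrite -[X in X *m _]submxK (inGmE GE1) (inGmE GE0) !mulmx_block in EE1.
move: EE1; rewrite !mulmx0 !mul0mx !addr0 !add0r => /eq_block_mx [eqS eqO eqC eqT].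
case: GE1 => _ uS uT.
have EO : ursubmx E = 0 by rewrite -(mulmxK uT (ursubmx E)) eqO mul0mx.
move: eqS eqC; rewrite EO !mul0mx !addr0 => eqS eqC.
split=> //.
  by rewrite -eqS mulmxK.
by rewrite -eqT mulmxK.
Qed.

Lemma inGm_conj E1 E0 : inGm E1 -> inGm E0 -> inGm (E1 *m E0 *m invmx E1).
Proof.
move=> GE1 GE0; have [EO ES ET _] := inGm_conj_blocks GE1 GE0.
case: GE1 => _ uS1 uT1; case: GE0 => _ uS0 uT0.
by split; rewrite ?ES ?ET // !unitmx_mul ?unitmx_inv ?uS1 ?uS0 ?uT1 ?uT0.
Qed.

Lemma inGm_inv E : inGm E -> inGm (invmx E).
Proof.
move=> GE; have EF : E *m invmx E = 1%:M by rewrite mulmxV // inGm_unit.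
rewrite -[X in _ *m X]submxK {1}(inGmE GE) mulmx_block (scalar_mx_block n n 1) in EF.
move: EF; rewrite !mul0mx !addr0 => /eq_block_mx [eqS eqO _ eqT].
case: GE => _ uS uT.
have FO : ursubmx (invmx E) = 0 by rewrite -(mulKmx uS (ursubmx _)) eqO mulmx0.
move: eqT; rewrite FO mulmx0 add0r => eqT.
by split=> //; [case: (mulmx1_unit eqS) | case: (mulmx1_unit eqT)].
Qed.

End BlockGroup.

Lemma subDDr (V : zmodType) (a b w : V) : (a + w) - (b + w) = a - b.
Proof. by rewrite [b + w]addrC addrKA. Qed.

Lemma mulmx_affine n k (K : 'M[R]_n) (u v : 'M[R]_(n, k)) :
  K *m u + (1%:M - K) *m v = K *m (u - v) + v.
Proof. by rewrite mulmxBl mul1mx mulmxBr addrCA [LHS]addrC. Qed.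

Section Quandle.
Variable n : nat.
Implicit Types p q x y z : pt n.

Lemma inX_inGm p : inX p <-> inGm (Mx p.1).
Proof.
rewrite /inX /inG /inGm !invertibleE Mx_blkS Mx_blkT -Mx_blkO -(Mx_mzero n n).
by split=> [[/(congr1 Mx) -> [uS uT]] | [/Mx_inj -> uS uT]].
Qed.

Lemma inX_unit p : inX p -> Mx p.1 \in unitmx.
Proof. by move/inX_inGm/inGm_unit. Qed.

Lemma inX_invertible p : inX p -> invertible p.1.
Proof. by move/inX_unit/invertibleE. Qed.

Lemma pt_eq p q : Mx p.1 = Mx q.1 -> Vx p.2 = Vx q.2 -> p = q.
Proof. by case: p q => [E x] [F y] /= /Mx_inj -> /Vx_inj ->. Qed.

Lemma qop_mx p q : inX q -> Mx (qop p q).1 = Mx q.1 *m Mx p.1 *m invmx (Mx q.1).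
Proof.
by move=> Xq; rewrite /qop /= !Mx_mmul Mx_minv //; apply: inX_invertible.
Qed.

Lemma qop_vec p q : Vx (qop p q).2 =
  ulsubmx (Mx q.1) *m Vx p.2 + (1%:M - ulsubmx (Mx q.1)) *m Vx q.2.
Proof. by rewrite /qop /= Vx_vadd !Vx_mvmul Mx_msub Mx_idm Mx_blkS. Qed.

Lemma qop_inX p q : inX p -> inX q -> inX (qop p q).
Proof.
move=> /inX_inGm Gp Xq; apply/inX_inGm; rewrite qop_mx //.
by apply: inGm_conj => //; apply/inX_inGm.
Qed.

Lemma qop_id p : inX p -> qop p p = p.
Proof.
move=> Xp; apply: pt_eq; first by rewrite qop_mx // mulmxK // inX_unit.
by rewrite qop_vec -mulmxDl addrC subrK mul1mx.
Qed.

Section ConjugateBlocks.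
Variables p q : pt n.
Hypotheses (Xp : inX p) (Xq : inX q).
Let blocks := inGm_conj_blocks (proj1 (inX_inGm q) Xq) (proj1 (inX_inGm p) Xp).

Lemma qop_S : ulsubmx (Mx (qop p q).1) =
  ulsubmx (Mx q.1) *m ulsubmx (Mx p.1) *m invmx (ulsubmx (Mx q.1)).
Proof. by rewrite qop_mx //; case: blocks. Qed.

Lemma qop_T : drsubmx (Mx (qop p q).1) =
  drsubmx (Mx q.1) *m drsubmx (Mx p.1) *m invmx (drsubmx (Mx q.1)).
Proof. by rewrite qop_mx //; case: blocks. Qed.

Lemma qop_C :
  dlsubmx (Mx (qop p q).1) *m ulsubmx (Mx q.1) + drsubmx (Mx (qop p q).1) *m dlsubmx (Mx q.1) =
  dlsubmx (Mx q.1) *m ulsubmx (Mx p.1) + drsubmx (Mx q.1) *m dlsubmx (Mx p.1).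
Proof. by rewrite qop_mx //; case: blocks. Qed.

End ConjugateBlocks.

Lemma qop_dist x y z : inX x -> inX y -> inX z ->
  qop (qop x y) z = qop (qop x z) (qop y z).
Proof.
move=> Xx Xy Xz; have Xyz := qop_inX Xy Xz.
have uz := inX_unit Xz; have uyz := inX_unit Xyz.
apply: pt_eq.
  rewrite (qop_mx _ Xz) (qop_mx _ Xyz) -[LHS](mulmxK uyz); congr (_ *m _).
  by rewrite !qop_mx // !mulmxA !mulmxKV // inX_unit.
have [_ uSz _] := proj1 (inX_inGm z) Xz.
rewrite !qop_vec (qop_S Xy Xz) !mulmx_affine subDDr -mulmxBr subDDr.
by rewrite -(addrA _ (Vx y.2)) mulmxDr !mulmxA mulmxKV // addrA.
Qed.

Definition qop_rinv q p : pt n :=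
  (mmul (mmul (Fm (invmx (Mx q.1))) p.1) q.1,
   mvmul (Fm (invmx (ulsubmx (Mx q.1)))) (vsub p.2 (mvmul (msub (idm n) (blkS q.1)) q.2))).

Lemma qop_rinv_mx q p : Mx (qop_rinv q p).1 = invmx (Mx q.1) *m Mx p.1 *m Mx q.1.
Proof. by rewrite /qop_rinv /= !Mx_mmul MxK. Qed.

Lemma qop_rinv_vec q p : Vx (qop_rinv q p).2 =
  invmx (ulsubmx (Mx q.1)) *m (Vx p.2 - (1%:M - ulsubmx (Mx q.1)) *m Vx q.2).
Proof. by rewrite /qop_rinv /= Vx_mvmul MxK Vx_vsub Vx_mvmul Mx_msub Mx_idm Mx_blkS. Qed.

Lemma qop_rinv_inX q p : inX q -> inX p -> inX (qop_rinv q p).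
Proof.
move=> /inX_inGm Gq /inX_inGm Gp; apply/inX_inGm; rewrite qop_rinv_mx.
by rewrite -{2}(invmxK (Mx q.1)); apply: inGm_conj => //; apply: inGm_inv.
Qed.

Lemma qop_rinvK q p : inX q -> qop_rinv q (qop p q) = p.
Proof.
move=> Xq; have [_ uS _] := proj1 (inX_inGm q) Xq.
apply: pt_eq; last by rewrite qop_rinv_vec qop_vec addrK mulKmx.
by rewrite qop_rinv_mx qop_mx // !mulmxA mulVmx ?inX_unit // mul1mx mulmxKV ?inX_unit.
Qed.

Lemma qop_rinvKV q p : inX q -> qop (qop_rinv q p) q = p.
Proof.
move=> Xq; have [_ uS _] := proj1 (inX_inGm q) Xq.
apply: pt_eq; last by rewrite qop_vec qop_rinv_vec mulKVmx // subrK.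
by rewrite qop_mx // qop_rinv_mx !mulmxA mulmxV ?inX_unit // mul1mx mulmxK ?inX_unit.
Qed.

End Quandle.

Section Module.
Variable n : nat.
Implicit Types p q x y z : pt n.

Lemma eta7E p q a : Vx (eta7 p q a) = drsubmx (Mx q.1) *m Vx a.
Proof. by rewrite /eta7 Vx_mvmul Mx_blkT. Qed.

Lemma tau7E p q a : Vx (tau7 p q a) = (1%:M - drsubmx (Mx q.1)) *m Vx a.
Proof. by rewrite /tau7 Vx_mvmul Mx_msub Mx_idm Mx_blkT. Qed.

Lemma kappa7E p q : Vx (kappa7 p q) = dlsubmx (Mx q.1) *m (Vx p.2 - Vx q.2).
Proof. by rewrite /kappa7 Vx_mvmul Mx_blkC Vx_vsub. Qed.

Lemma eta7_additive p q : Defs.additive (eta7 p q).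
Proof. by move=> a b; apply: Vx_inj; rewrite Vx_vadd !eta7E Vx_vadd mulmxDr. Qed.

Lemma tau7_additive p q : Defs.additive (tau7 p q).
Proof. by move=> a b; apply: Vx_inj; rewrite Vx_vadd !tau7E Vx_vadd mulmxDr. Qed.

Lemma eta7_bijective p q : inX q -> bijective_map (eta7 p q).
Proof.
move=> /inX_inGm [_ _ uT]; exists (mvmul (Fm (invmx (drsubmx (Mx q.1))))).
by split=> a; apply: Vx_inj; rewrite ?eta7E Vx_mvmul MxK ?eta7E ?mulKmx ?mulKVmx.
Qed.

Lemma eta7_comp x y z a : inX x -> inX y -> inX z ->
  eta7 (qop x y) z (eta7 x y a) = eta7 (qop x z) (qop y z) (eta7 x z a).
Proof.
move=> Xx Xy Xz; have [_ _ uT] := proj1 (inX_inGm z) Xz.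
by apply: Vx_inj; rewrite !eta7E (qop_T Xy Xz) !mulmxA mulmxKV.
Qed.

Lemma eta7_tau7_comp x y z a : inX x -> inX y -> inX z ->
  eta7 (qop x y) z (tau7 x y a) = tau7 (qop x z) (qop y z) (eta7 y z a).
Proof.
move=> Xx Xy Xz; have [_ _ uT] := proj1 (inX_inGm z) Xz.
apply: Vx_inj; rewrite eta7E !tau7E eta7E (qop_T Xy Xz).
by rewrite !mulmxBl !mul1mx mulmxBr !mulmxA mulmxKV.
Qed.

Lemma tau7_comp x y z a :
  tau7 (qop x y) z a = vadd (eta7 (qop x z) (qop y z) (tau7 x z a))
                            (tau7 (qop x z) (qop y z) (tau7 y z a)).
Proof.
by apply: Vx_inj; rewrite Vx_vadd eta7E !tau7E -mulmxDl [_ + (1%:M - _)]addrC subrK mul1mx.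
Qed.

Lemma tau7_eta7_diag x a : vadd (tau7 x x a) (eta7 x x a) = a.
Proof. by apply: Vx_inj; rewrite Vx_vadd eta7E tau7E -mulmxDl subrK mul1mx. Qed.

Lemma kappa7_diag x : kappa7 x x = vzero.
Proof. by apply: Vx_inj; rewrite kappa7E subrr mulmx0 Vx_vzero. Qed.

Lemma cocycle_mx (Sy Cy Sz Cz Tz K D : 'M[R]_n) (x y z : 'cV[R]_n) :
  D *m Sz + K *m Cz = Cz *m Sy + Tz *m Cy ->
  Tz *m (Cy *m (x - y)) + Cz *m ((Sy *m x + (1%:M - Sy) *m y) - z) =
  K *m (Cz *m (x - z)) + (1%:M - K) *m (Cz *m (y - z)) +
  D *m ((Sz *m x + (1%:M - Sz) *m z) - (Sz *m y + (1%:M - Sz) *m z)).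
Proof.
move=> eqC.
rewrite !mulmx_affine subDDr -!mulmxBr !subDDr -(addrA _ y) (mulmxDr Cz) !mulmxA.
rewrite addrA -mulmxDl [RHS]addrAC -mulmxDl; congr (_ *m _ + _).
by rewrite [LHS]addrC -eqC addrC.
Qed.

End Module.

Section Cohomology.
Variable n : nat.
Implicit Types p q x y z : pt n.

Lemma kappa7_cocycle x y z : inX x -> inX y -> inX z ->
  vadd (eta7 (qop x y) z (kappa7 x y)) (kappa7 (qop x y) z) =
  vadd (vadd (eta7 (qop x z) (qop y z) (kappa7 x z))
             (tau7 (qop x z) (qop y z) (kappa7 y z)))
       (kappa7 (qop x z) (qop y z)).
Proof.
move=> Xx Xy Xz; apply: Vx_inj.
rewrite !Vx_vadd !eta7E tau7E !kappa7E !qop_vec.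
exact: cocycle_mx (qop_C Xy Xz).
Qed.

(* When [T_q = I], [eta_{p,q}] is the identity and [tau_{p,q}] vanishes. *)
Lemma coboundary_vanishes_at_fixed kappa p q :
  in_B2 (@qop n) (@eta7 n) (@tau7 n) kappa -> inX p -> inX q ->
  qop p q = p -> blkT q.1 = idm n -> kappa p q = vzero.
Proof.
move=> [f [_ kappaE]] Xp Xq pq Tq; rewrite kappaE // pq; apply: Vx_inj.
by rewrite Vx_vsub Vx_vadd eta7E tau7E -Mx_blkT Tq Mx_idm subrr mul0mx addr0 mul1mx subrr Vx_vzero.
Qed.

Definition unipotent_mx : 'M[R]_(n + n) := block_mx 1%:M 0 1%:M 1%:M.
Definition fixed_pt : pt n := (Fm 1%:M, fun _ => 1%R).
Definition unipotent_pt : pt n := (Fm unipotent_mx, vzero).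

Lemma inX_fixed_pt : inX fixed_pt.
Proof.
by apply/inX_inGm; rewrite MxK (scalar_mx_block n n 1); apply: inGm_lblock; apply: unitmx1.
Qed.

Lemma inX_unipotent_pt : inX unipotent_pt.
Proof. by apply/inX_inGm; rewrite MxK; apply: inGm_lblock; apply: unitmx1. Qed.

Lemma qop_fixed_unipotent : qop fixed_pt unipotent_pt = fixed_pt.
Proof.
apply: pt_eq.
  rewrite qop_mx; last exact: inX_unipotent_pt.
  by rewrite [Mx (Fm 1%:M)]MxK mulmx1 mulmxV //; apply: (inX_unit inX_unipotent_pt).
by rewrite qop_vec /= MxK block_mxKul subrr mul0mx addr0 mul1mx.
Qed.

Lemma kappa7_not_coboundary : (0 < n)%N -> ~ in_B2 (@qop n) (@eta7 n) (@tau7 n) (@kappa7 n).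
Proof.
move=> n_gt0 /coboundary_vanishes_at_fixed /(_ inX_fixed_pt inX_unipotent_pt qop_fixed_unipotent).
have -> : blkT unipotent_pt.1 = idm n by apply: Mx_inj; rewrite Mx_blkT MxK block_mxKdr Mx_idm.
move=> /(_ erefl) /(congr1 Vx); rewrite kappa7E Vx_vzero MxK block_mxKdl mul1mx.
move/matrixP => /(_ (Ordinal n_gt0) ord0); by rewrite !mxE => /eqP; rewrite subr0 oner_eq0.
Qed.

End Cohomology.

Section Closeness.
Local Open Scope R_scope.

Lemma vclose_mono n : monotone_close (@vclose n).
Proof. by move=> d d' x y dd' xy i; have := xy i; lra. Qed.

Lemma pclose_mono n : monotone_close (@pclose n).
Proof.
move=> d d' x y dd' [E_xy x_xy].
by split=> [i j|i]; [have := E_xy i j | have := x_xy i]; lra.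
Qed.

Lemma prclose_mono T U (cT : R -> T -> T -> Prop) (cU : R -> U -> U -> Prop) :
  monotone_close cT -> monotone_close cU -> monotone_close (prclose cT cU).
Proof.
move=> cT_mono cU_mono d d' x y dd' [xy1 xy2].
by split; [apply: cT_mono xy1 | apply: cU_mono xy2].
Qed.

End Closeness.

Ltac rcont_step mono :=
  match goal with
  | |- rcontM _ _ (fun t => mmul _ _) => apply: (rcontM_mmul mono)
  | |- rcontV _ _ (fun t => mvmul _ _) => apply: (rcontV_mvmul mono)
  | |- rcontM _ _ (fun t => msub _ _) => apply: (rcontM_msub mono)
  | |- rcontV _ _ (fun t => vadd _ _) => apply: (rcontV_vadd mono)
  | |- rcontV _ _ (fun t => vsub _ _) => apply: (rcontV_vsub mono)
  | |- rcontM _ _ (fun t => minv _) => apply: (rcontM_minv mono)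
  | |- forall t, PX2 t -> invertible _ => by move=> t [_ /inX_invertible]
  | |- rcontM _ _ _ => move=> ? ?
  | |- rcontV _ _ _ => move=> ?
  | |- rcont _ _ _ =>
      first [ exact: rcont_const
            | apply: rcont_proj;
              rewrite /prclose /pclose /mclose /vclose => ? ? ? ?; intuition ]
  end.

Section Continuity.
Variable n : nat.

Lemma qop_cont :
  cont_on (prclose pclose pclose) pclose PX2 (fun a : pt n * pt n => qop a.1 a.2).
Proof.
have mono := prclose_mono (@pclose_mono n) (@pclose_mono n).
by apply: (cont_on_pt mono); rewrite /qop /blkS /=; repeat rcont_step mono.
Qed.

Lemma qop_rinv_cont (q : pt n) : cont_on pclose pclose inX (qop_rinv q).
Proof.
have mono := @pclose_mono n.
by apply: (cont_on_pt mono); rewrite /qop_rinv /blkS /=; repeat rcont_step mono.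
Qed.

Lemma eta7_cont (p q : pt n) : vcont (eta7 p q).
Proof.
have mono := @vclose_mono n.
by apply: (cont_on_vec mono); rewrite /eta7; repeat rcont_step mono.
Qed.

Lemma tau7_cont (p q : pt n) : vcont (tau7 p q).
Proof.
have mono := @vclose_mono n.
by apply: (cont_on_vec mono); rewrite /tau7; repeat rcont_step mono.
Qed.

Lemma kappa7_cont :
  cont_on (prclose pclose pclose) vclose PX2 (fun a : pt n * pt n => kappa7 a.1 a.2).
Proof.
have mono := prclose_mono (@pclose_mono n) (@pclose_mono n).
by apply: (cont_on_vec mono); rewrite /kappa7 /blkC /=; repeat rcont_step mono.
Qed.

End Continuity.

Lemma qop_is_top_quandle n : is_top_quandle (@qop n).
Proof.
split; first exact: qop_inX.
split; first exact: qop_id.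
split; last by split; [exact: qop_dist | exact: qop_cont].
move=> q Xq; exists (qop_rinv q); split; [|split; [|split]].
- by move=> p; apply: qop_rinv_inX.
- by move=> p _; apply: qop_rinvK.
- by move=> p _; apply: qop_rinvKV.
- exact: qop_rinv_cont.
Qed.

Lemma eta7_tau7_is_top_module n : is_top_module (@qop n) (@eta7 n) (@tau7 n).
Proof.
split; [|split].
- move=> p q _ Xq; split; [exact: eta7_additive | split; [exact: eta7_bijective |]].
  by split; [exact: eta7_cont | split; [exact: tau7_additive | exact: tau7_cont]].
- move=> x y z Xx Xy Xz.
  by split; [|split] => a; [exact: eta7_comp | exact: eta7_tau7_comp | exact: tau7_comp].
- by move=> x _ a; apply: tau7_eta7_diag.
Qed.

Lemma kappa7_in_Z2 n : in_Z2 (@qop n) (@eta7 n) (@tau7 n) (@kappa7 n).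
Proof.
split; first exact: kappa7_cont.
by split; [move=> x _; apply: kappa7_diag | exact: kappa7_cocycle].
Qed.

Theorem mainTheorem7 (n : nat) (hn : (1 <= n)%nat) :
  is_top_quandle (@qop n) /\
  is_top_module (@qop n) (@eta7 n) (@tau7 n) /\
  in_Z2 (@qop n) (@eta7 n) (@tau7 n) (@kappa7 n) /\
  ~ in_B2 (@qop n) (@eta7 n) (@tau7 n) (@kappa7 n).
Proof.
split; first exact: qop_is_top_quandle.
split; first exact: eta7_tau7_is_top_module.
split; first exact: kappa7_in_Z2.
exact: kappa7_not_coboundary.
Qed.
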